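(* Let $H$ be a complex Hilbert space, $V=\mathcal{L}(H)_{sa}$, $r$ a positive integer and $\mathfrak{M}(r)$ the manifold of projections in $V$ of rank $r$. Then $\mathfrak{M}(r)$ is homogeneous (the action is transitive) under each of the groups $\operatorname{Aut}^\circ(V)$ and $\mathfrak{S}(r)$.
   Context: $V$ is the set of self-adjoint bounded operators on $H$ with Jordan product $x\circ y=\frac12(xy+yx)$. A projection is $a=a^2=a^*$. $\operatorname{Aut}^\circ(V)$ is the connected component of the identity in the group of Jordan automorphisms of $V$ (equivalently of Jordan $*$-automorphisms of $\mathcal{L}(H)$, restricted to $V$), with the topology of uniform convergence on the unit ball. For a projection $p$, the Peirce reflection is $\sigma_p=\mathrm{Id}-2P_{1/2}(p)$, where $P_{1/2}(p)x=px(\mathbf 1-p)+(\mathbf 1-p)xp$; $\mathfrak{S}(r)$ is the group generated by the $\sigma_p$, $p\in\mathfrak{M}(r)$. *)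

From HB Require Import structures.
From mathcomp Require Import all_boot all_order all_algebra.
From mathcomp Require Import reals complex.
Set Implicit Arguments. Unset Strict Implicit. Unset Printing Implicit Defensive.
Import Order.TTheory GRing.Theory Num.Theory.
Local Open Scope ring_scope.

Section Defs.
Variables (R : realType) (H : lmodType R[i]) (ip : H -> H -> R[i]).

Definition hnorm (x : H) : R := Num.sqrt (complex.Re (ip x x)).

Definition is_complex_hilbert : Prop :=
  [/\ (forall (a : R[i]) (x y z : H), ip (a *: x + y) z = a * ip x z + ip y z),
      (forall x y : H, ip y x = (ip x y)^*),
      (forall x : H, 0 <= ip x x),
      (forall x : H, ip x x = 0 -> x = 0) &
      (forall u : nat -> H,
         (forall e : R, 0 < e -> exists N : nat, forall m n : nat,
            (N <= m)%N -> (N <= n)%N -> hnorm (u m - u n) < e) ->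
         exists l : H, forall e : R, 0 < e -> exists N : nat, forall n : nat,
            (N <= n)%N -> hnorm (u n - l) < e)].

Definition opnorm_le (T : H -> H) (c : R) : Prop :=
  forall h : H, hnorm (T h) <= c * hnorm h.

Definition is_bounded_op (T : H -> H) : Prop :=
  (forall (a : R[i]) (x y : H), T (a *: x + y) = a *: T x + T y) /\
  exists c : R, opnorm_le T c.

Definition in_V (T : H -> H) : Prop :=
  is_bounded_op T /\ forall x y : H, ip (T x) y = ip x (T y).

Definition op_add (x y : H -> H) : H -> H := fun h => x h + y h.
Definition op_scale (t : R) (x : H -> H) : H -> H := fun h => (t%:C)%C *: x h.

Definition jprod (x y : H -> H) : H -> H :=
  fun h => (2%:R)^-1 *: (x (y h) + y (x h)).

Definition is_projection (a : H -> H) : Prop := in_V a /\ a \o a = a.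

(* the range of a has (complex) dimension r *)
Definition has_rank (r : nat) (a : H -> H) : Prop :=
  exists e : 'I_r -> H,
    (forall c : 'I_r -> R[i], \sum_(i < r) c i *: e i = 0 -> forall i, c i = 0) /\
    (forall y : H, (exists x, a x = y) <-> exists c : 'I_r -> R[i], y = \sum_(i < r) c i *: e i).

Definition in_M (r : nat) (a : H -> H) : Prop := is_projection a /\ has_rank r a.

(* Jordan automorphisms of V (maps of operators, only their restriction to V matters) *)
Definition jordan_aut (Phi : (H -> H) -> (H -> H)) : Prop :=
  [/\ (forall x, in_V x -> in_V (Phi x)),
      (forall x y, in_V x -> in_V y -> Phi x = Phi y -> x = y),
      (forall y, in_V y -> exists x, in_V x /\ Phi x = y),
      (forall x y, in_V x -> in_V y -> Phi (op_add x y) = op_add (Phi x) (Phi y)) &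
      (forall (t : R) x, in_V x -> Phi (op_scale t x) = op_scale t (Phi x)) /\
      (forall x y, in_V x -> in_V y -> Phi (jprod x y) = jprod (Phi x) (Phi y))].

Definition aut_close (Phi Psi : (H -> H) -> (H -> H)) (eps : R) : Prop :=
  forall x, in_V x -> opnorm_le x 1 -> opnorm_le (fun h => Phi x h - Psi x h) eps.

(* U is open relative to S (topology of uniform convergence on the unit ball) *)
Definition rel_open (S U : ((H -> H) -> (H -> H)) -> Prop) : Prop :=
  forall Phi, S Phi -> U Phi -> exists eps : R, 0 < eps /\
    forall Psi, S Psi -> aut_close Phi Psi eps -> U Psi.

Definition connected_set (S : ((H -> H) -> (H -> H)) -> Prop) : Prop :=
  forall U1 U2, rel_open S U1 -> rel_open S U2 ->
    (forall Phi, S Phi -> U1 Phi \/ U2 Phi) ->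
    (forall Phi, S Phi -> U1 Phi -> U2 Phi -> False) ->
    (forall Phi, S Phi -> U1 Phi) \/ (forall Phi, S Phi -> U2 Phi).

(* Aut°(V) : the connected component of the identity in Aut(V) *)
Definition in_Aut0 (Phi : (H -> H) -> (H -> H)) : Prop :=
  exists S : ((H -> H) -> (H -> H)) -> Prop,
    [/\ forall Psi, S Psi -> jordan_aut Psi, connected_set S, S id & S Phi].

(* Peirce reflection sigma_p = Id - 2 P_{1/2}(p),
   P_{1/2}(p) x = p x (1-p) + (1-p) x p *)
Definition peirce_half (p x : H -> H) : H -> H :=
  fun h => p (x (h - p h)) + (x (p h) - p (x (p h))).
Definition sigma (p : H -> H) : (H -> H) -> (H -> H) :=
  fun x h => x h - 2%:R *: peirce_half p x h.

(* S(r) : group generated by sigma_p, p in M(r); since each sigma_p is an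
   involution, its elements are the finite composites of such reflections *)
Inductive in_S (r : nat) : ((H -> H) -> (H -> H)) -> Prop :=
  | S_id : in_S r id
  | S_step : forall p g, in_M r p -> in_S r g -> in_S r (sigma p \o g).

End Defs.

From HB Require Import structures.
From mathcomp Require Import all_boot all_order all_algebra.
From mathcomp Require Import classical_sets reals complex boolp.
From mathcomp Require Import ring.
Set Implicit Arguments. Unset Strict Implicit. Unset Printing Implicit Defensive.
Import Order.TTheory GRing.Theory Num.Theory.
Local Open Scope ring_scope.

(* For an orthogonal projection p and |c| = 1, conjugation by the
   unitary p + c (1 - p) is a Jordan automorphism of V depending Lipschitz
   continuously on c; for c = -1 it is the Peirce reflection sigma_p.  Moving c
   along the upper half of the unit circle joins the identity to sigma_p, hence
   S(r) is contained in Aut°(V) and it suffices to show that S(r) acts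
   transitively on M(r).
   Given p, q in M(r), we build by induction some g in S(r) and an orthonormal
   family b_0, ..., b_(k-1) fixed by both g p and q.  To extend it, pick a unit
   vector c in ran q orthogonal to the b_j, and a unit vector a in ran (g p)
   orthogonal to the b_j with (g p) c = t a, t >= 0.  The projection e onto
   (ran (g p) minus a) plus the line through a + c has rank r, and sigma_e
   trades a for c while fixing the rest of ran (g p).  At k = r both g p and q
   are the orthogonal projection onto the span of the b_j. *)

Definition is_inner_product (R : realType) (H : lmodType R[i]) (ip : H -> H -> R[i]) :=
  [/\ forall (a : R[i]) (x y z : H), ip (a *: x + y) z = a * ip x z + ip y z,
      forall x y : H, ip y x = (ip x y)^*,
      forall x : H, 0 <= ip x x &
      forall x : H, ip x x = 0 -> x = 0].

Lemma complex_hilbert_inner_product (R : realType) (H : lmodType R[i]) (ip : H -> H -> R[i]) :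
  is_complex_hilbert ip -> is_inner_product ip.
Proof. by case. Qed.

Section LinearMaps.
Variables (R : realType) (H : lmodType R[i]).

Section OneMap.
Variable T : H -> H.
Hypothesis hT : linear T.

Lemma linB x y : T (x - y) = T x - T y.
Proof. exact: zmod_morphism_linear hT x y. Qed.

Lemma linZ a x : T (a *: x) = a *: T x.
Proof. exact: scalable_linear hT a x. Qed.

Lemma lin0 : T 0 = 0.
Proof. by have := linB 0 0; rewrite !subrr. Qed.

Lemma linN x : T (- x) = - T x.
Proof. by rewrite -sub0r linB lin0 sub0r. Qed.

Lemma linD x y : T (x + y) = T x + T y.
Proof. by have := hT 1 x y; rewrite !scale1r. Qed.

Lemma lin_sum n (c : 'I_n -> R[i]) (f : 'I_n -> H) :
  T (\sum_(i < n) c i *: f i) = \sum_(i < n) c i *: T (f i).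
Proof.
apply: (big_ind2 (fun u v => T u = v)) => [|u1 v1 u2 v2 <- <-|i _];
  by rewrite ?lin0 ?linD ?linZ.
Qed.

End OneMap.

Lemma linear_comp (S T : H -> H) : linear S -> linear T -> linear (S \o T).
Proof. by move=> hS hT a x y /=; rewrite hT hS. Qed.

Lemma linear_jprod (x y : H -> H) : linear x -> linear y -> linear (jprod x y).
Proof.
move=> hx hy a u v; rewrite /jprod !(hx, hy) scalerA mulrC -scalerA -scalerDr.
by congr (_ *: _); rewrite scalerDr addrACA.
Qed.

End LinearMaps.

Section Unimodular.
Variable R : realType.

Definition unimodular (c : R[i]) := c * c^* = 1.

Lemma unimodularJ c : unimodular c -> unimodular c^*.
Proof. by rewrite /unimodular conjCK mulrC. Qed.

Lemma unimodularN1 : unimodular (-1).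
Proof. by rewrite /unimodular rmorphN1 mulrNN mul1r. Qed.

Lemma unimodular_neq0 c : unimodular c -> c != 0.
Proof. by apply: contra_eqN => /eqP->; rewrite mul0r eq_sym oner_eq0. Qed.

Lemma unimodular_conjV c : unimodular c -> c^* = c^-1.
Proof. by move/mulr1_eq. Qed.

End Unimodular.

Arguments unimodularN1 {R}.

Section CirclePath.
Variable R : realType.
Local Notation "x %:C" := (real_complex R x) : ring_scope.

Definition circle_re (t : R) := ((1 - t ^+ 2) ^+ 2 - 4 * t ^+ 2) / (1 + t ^+ 2) ^+ 2.
Definition circle_im (t : R) := 4 * t * (1 - t ^+ 2) / (1 + t ^+ 2) ^+ 2.

(* [circle_path t = ((1 + i t) / (1 - i t))^2] runs along the upper half of
   the unit circle from [1] to [-1] as [t] runs over [[0, 1]]. *)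
Definition circle_path (t : R) : R[i] := Complex (circle_re t) (circle_im t).

Lemma sqrD1_neq0 (t : R) : 1 + t ^+ 2 != 0.
Proof. by rewrite paddr_eq0 ?sqr_ge0 // oner_eq0. Qed.

Lemma circle_path_unimodular t : unimodular (circle_path t).
Proof.
rewrite /unimodular /circle_path /circle_re /circle_im /=; apply/eqP.
by rewrite eq_complex /=; apply/andP; split; apply/eqP; field; rewrite sqrD1_neq0.
Qed.

Lemma circle_path0 : circle_path 0 = 1.
Proof.
apply/eqP; rewrite eq_complex /= /circle_re /circle_im.
by apply/andP; split; apply/eqP; field.
Qed.

Lemma circle_path1 : circle_path 1 = -1.
Proof.
apply/eqP; rewrite eq_complex /= /circle_re /circle_im oppr0.
by apply/andP; split; apply/eqP; field.
Qed.

Lemma circle_path_lipschitz t s :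
  (circle_path t - circle_path s) * (circle_path t - circle_path s)^* <=
  ((4 * `|t - s|) ^+ 2)%:C.
Proof.
have -> : (circle_path t - circle_path s) * (circle_path t - circle_path s)^* =
    (16 * (t - s) ^+ 2 * ((1 + t * s) ^+ 2 / ((1 + t ^+ 2) * (1 + s ^+ 2)) ^+ 2))%:C.
  apply/eqP; rewrite eq_complex /= /circle_re /circle_im.
  by apply/andP; split; apply/eqP; field; rewrite !sqrD1_neq0.
have -> : (4 * `|t - s|) ^+ 2 = 16 * (t - s) ^+ 2.
  by rewrite exprMn real_normK ?num_real // -natrX.
rewrite lecR; apply: ler_piMr; first by rewrite mulr_ge0 ?sqr_ge0.
have Q1 : 1 <= (1 + t ^+ 2) * (1 + s ^+ 2) by rewrite mulr_ege1 // lerDl sqr_ge0.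
have CS : (1 + t * s) ^+ 2 <= (1 + t ^+ 2) * (1 + s ^+ 2).
  by rewrite -subr_ge0 [X in 0 <= X](_ : _ = (t - s) ^+ 2) ?sqr_ge0 //; ring.
rewrite ler_pdivrMr ?exprn_gt0 ?(lt_le_trans ltr01) // mul1r.
by apply: le_trans CS _; rewrite expr2 ler_peMr // (le_trans ler01).
Qed.

End CirclePath.

Section UnitInterval.
Variable R : realType.

Lemma unit_interval_connected (A B : R -> Prop) :
  (forall t, 0 <= t <= 1 -> A t ->
     exists2 d, 0 < d & forall s, 0 <= s <= 1 -> `|t - s| < d -> A s) ->
  (forall t, 0 <= t <= 1 -> B t ->
     exists2 d, 0 < d & forall s, 0 <= s <= 1 -> `|t - s| < d -> B s) ->
  (forall t, 0 <= t <= 1 -> A t \/ B t) ->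
  (forall t, 0 <= t <= 1 -> A t -> B t -> False) ->
  A 0 -> forall t, 0 <= t <= 1 -> A t.
Proof.
move=> openA openB AorB AnB A0.
pose E t := 0 <= t <= 1 /\ forall s, 0 <= s <= t -> A s.
have E0 : E 0.
  split=> [|s /andP[s0 s0']]; first by rewrite lexx ler01.
  by have -> : s = 0 by apply/le_anti; rewrite s0 s0'.
have supE : has_sup E by split; [exists 0 | exists 1 => t [/andP[]]].
set tau := sup E.
have tau01 : 0 <= tau <= 1.
  by rewrite (sup_upper_bound supE E0) ge_sup //; [exists 0 | move=> t [/andP[]]].
have below s : 0 <= s -> s < tau -> A s.
  move=> s0 st; have ts0 : 0 < tau - s by rewrite subr_gt0.
  have [t [_ At]] := sup_adherent ts0 supE.
  rewrite -/tau opprB addrCA subrr addr0 => lt_st.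
  by apply: At; rewrite s0 ltW.
have Atau : A tau.
  have [//|Btau] := AorB tau tau01; have [d d0 Bd] := openB _ tau01 Btau.
  have [t [t01 At] lt_t] := sup_adherent d0 supE; rewrite -/tau in lt_t.
  have le_t : t <= tau by apply: sup_upper_bound.
  have t0 : 0 <= t by case/andP: t01.
  exfalso; apply: (AnB t t01); first by apply: At; rewrite t0 lexx.
  by apply: Bd; rewrite // ger0_norm ?subr_ge0 // ltrBlDr addrC -ltrBlDr.
have tau1 : tau = 1.
  apply/eqP; rewrite eq_le (andP tau01).2 /= leNgt; apply/negP => lt_tau.
  have [d d0 Ad] := openA _ tau01 Atau.
  pose m := Num.min (d / 2) (1 - tau).
  have m0 : 0 < m by rewrite lt_min divr_gt0 // subr_gt0.
  have md : m < d by rewrite gt_min ltr_pdivrMr // ltr_pMr // ltr1n.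
  have m1 : tau + m <= 1 by rewrite -lerBrDl ge_min lexx orbT.
  suff : E (tau + m) by move/(sup_upper_bound supE); rewrite -/tau gerDl leNgt m0.
  split=> [|s /andP[s0 le_s]]; first by rewrite addr_ge0 ?(ltW m0) ?(andP tau01).1.
  have [lt_s|ge_s] := ltP s tau; first exact: below.
  apply: Ad; first by rewrite s0 (le_trans le_s m1).
  by rewrite distrC ger0_norm ?subr_ge0 // (le_lt_trans _ md) // lerBlDl.
move=> t /andP[t0 t1]; have [lt_t|ge_t] := ltP t tau; first exact: below.
suff -> : t = tau by [].
by apply/le_anti; rewrite tau1 in ge_t *; rewrite t1 ge_t.
Qed.

End UnitInterval.

Section InnerProductSpace.
Variables (R : realType) (H : lmodType R[i]) (ip : H -> H -> R[i]).
Hypothesis hip : is_inner_product ip.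
Local Notation C := R[i].
Local Notation "x %:C" := (real_complex R x) : ring_scope.

Lemma ipDZl (a : C) x y z : ip (a *: x + y) z = a * ip x z + ip y z.
Proof. by case: hip. Qed.
Lemma ipC x y : ip y x = (ip x y)^*.
Proof. by case: hip. Qed.
Lemma ip_ge0 x : 0 <= ip x x.
Proof. by case: hip. Qed.
Lemma ipDl x y z : ip (x + y) z = ip x z + ip y z.
Proof. by have := ipDZl 1 x y z; rewrite scale1r mul1r. Qed.
Lemma ip0l z : ip 0 z = 0.
Proof. by have := ipDl 0 0 z; rewrite addr0 => h; apply: (addrI (ip 0 z)); rewrite addr0 -h. Qed.
Lemma ipZl a x z : ip (a *: x) z = a * ip x z.
Proof. by rewrite -(addr0 (a *: x)) ipDZl ip0l addr0. Qed.
Lemma ipNl x z : ip (- x) z = - ip x z.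
Proof. by rewrite -scaleN1r ipZl mulN1r. Qed.
Lemma ipBl x y z : ip (x - y) z = ip x z - ip y z.
Proof. by rewrite ipDl ipNl. Qed.
Lemma ip0r z : ip z 0 = 0.
Proof. by rewrite ipC ip0l conjC0. Qed.
Lemma ipDr x y z : ip z (x + y) = ip z x + ip z y.
Proof. by rewrite (ipC x z) (ipC y z) ipC ipDl rmorphD. Qed.
Lemma ipZr a x z : ip z (a *: x) = a^* * ip z x.
Proof. by rewrite (ipC x z) ipC ipZl rmorphM. Qed.
Lemma ipNr x z : ip z (- x) = - ip z x.
Proof. by rewrite (ipC x z) ipC ipNl rmorphN. Qed.
Lemma ipBr x y z : ip z (x - y) = ip z x - ip z y.
Proof. by rewrite ipDr ipNr. Qed.
Lemma ip_suml n (c : 'I_n -> C) (f : 'I_n -> H) z :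
  ip (\sum_(i < n) c i *: f i) z = \sum_(i < n) c i * ip (f i) z.
Proof.
apply: (big_ind2 (fun u v => ip u z = v)) => [|u1 v1 u2 v2 <- <-|i _];
  by rewrite ?ip0l ?ipDl ?ipZl.
Qed.

Lemma ipxx_eq0 x : (ip x x == 0) = (x == 0).
Proof. by apply/eqP/eqP => [|->]; [case: hip => _ _ _; apply | exact: ip0l]. Qed.

(* Identities between vectors are checked after pairing with an arbitrary
   vector, where they become identities in [C] that [ring] and [field] solve. *)
Lemma eq_ipl x y : (forall z, ip x z = ip y z) -> x = y.
Proof.
move=> h; apply/eqP; rewrite -subr_eq0 -ipxx_eq0; apply/eqP.
by rewrite ipBl h subrr.
Qed.

Definition sqnorm x : R := complex.Re (ip x x).

Lemma ipE x : ip x x = (sqnorm x)%:C.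
Proof. by rewrite /sqnorm; have := ger0_Im (ip_ge0 x); case: (ip x x) => a b /= ->. Qed.

Lemma sqnorm_ge0 x : 0 <= sqnorm x.
Proof. by rewrite -ler0c -ipE ip_ge0. Qed.

Lemma hnorm_leE (k : R) a b : 0 <= k ->
  (hnorm ip a <= k * hnorm ip b) = (ip a a <= (k ^+ 2)%:C * ip b b).
Proof.
move=> k0; rewrite (ipE a) (ipE b) -rmorphM lecR /hnorm -/(sqnorm a) -/(sqnorm b).
rewrite -[k in k * _]ger0_norm // -sqrtr_sqr -sqrtrM ?sqr_ge0 // ler_sqrt //.
by rewrite mulr_ge0 ?sqr_ge0 ?sqnorm_ge0.
Qed.

Definition selfadj (T : H -> H) := forall x y, ip (T x) y = ip x (T y).

Definition orthoproj (e : H -> H) := [/\ linear e, selfadj e & forall h, e (e h) = e h].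

Lemma orthoproj_pyth e h : orthoproj e ->
  ip h h = ip (e h) (e h) + ip (h - e h) (h - e h).
Proof.
case=> _ se ee; have ehh : ip (e h) (e h) = ip h (e h) by rewrite se ee.
by rewrite !(ipBl, ipBr) ehh se; ring.
Qed.

Lemma orthoproj_contract e h : orthoproj e -> ip (e h) (e h) <= ip h h.
Proof. by move=> pe; rewrite [leRHS](orthoproj_pyth h pe) lerDl ip_ge0. Qed.

Lemma orthoproj_projection e : orthoproj e -> is_projection ip e.
Proof.
move=> pe; have [le se ee] := pe; split; last exact/funext.
split=> //; split=> //; exists 1 => h.
by rewrite hnorm_leE // expr1n mul1r orthoproj_contract.
Qed.

Lemma inV_linear x : in_V ip x -> linear x.
Proof. by case=> [[]]. Qed.

Lemma projection_orthoproj e : is_projection ip e -> orthoproj e.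
Proof. by case=> [[[le _] se] ee]; split=> // h; rewrite -[in RHS]ee. Qed.

Lemma in_M_orthoproj r e : in_M ip r e -> orthoproj e.
Proof. by case=> /projection_orthoproj. Qed.

Definition uphase (e : H -> H) (c : C) h := e h + c *: (h - e h).

Section Uphase.
Variable e : H -> H.
Hypothesis pe : orthoproj e.
Let le : linear e. Proof. by case: pe. Qed.
Let se : selfadj e. Proof. by case: pe. Qed.
Let ee : forall h, e (e h) = e h. Proof. by case: pe. Qed.

Lemma uphase_linear c : linear (uphase e c).
Proof.
move=> a x y; apply: eq_ipl => z; rewrite /uphase !(linD le, linB le, linZ le).
by rewrite !(ipDl, ipNl, ipZl); ring.
Qed.

Lemma proj_uphase c h : e (uphase e c h) = e h.
Proof. by rewrite /uphase (linD le) (linZ le) (linB le) ee subrr scaler0 addr0. Qed.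

Lemma uphaseM c d h : uphase e c (uphase e d h) = uphase e (c * d) h.
Proof.
rewrite {1}/uphase proj_uphase; apply: eq_ipl => z; rewrite /uphase.
by rewrite !(ipDl, ipNl, ipZl); ring.
Qed.

Lemma uphase1 h : uphase e 1 h = h.
Proof. by rewrite /uphase scale1r addrC subrK. Qed.

Lemma uphase_adj c h k : ip (uphase e c h) k = ip h (uphase e c^* k).
Proof. by rewrite /uphase !(ipDl, ipNl, ipZl, ipDr, ipNr, ipZr) conjCK se; ring. Qed.

Lemma uphaseK c h : unimodular c -> uphase e c (uphase e c^* h) = h.
Proof. by move=> hc; rewrite uphaseM hc uphase1. Qed.

Lemma uphaseKV c h : unimodular c -> uphase e c^* (uphase e c h) = h.
Proof. by move=> hc; rewrite uphaseM mulrC hc uphase1. Qed.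

Lemma hnorm_uphase c h : unimodular c -> hnorm ip (uphase e c h) = hnorm ip h.
Proof. by move=> hc; rewrite /hnorm uphase_adj uphaseKV. Qed.

End Uphase.

(* [peirce_rot e c x = U x U^*] with [U = uphase e c] (lemma [peirce_rotE]),
   written in Peirce form so that [peirce_rot e (-1)] is literally [sigma e]. *)
Definition peirce_rot (e : H -> H) (c : C) (x : H -> H) : H -> H :=
  fun h => x h + (c^* - 1) *: e (x (h - e h)) + (c - 1) *: (x (e h) - e (x (e h))).

Lemma peirce_rot1 e : peirce_rot e 1 = id.
Proof.
by apply/funext => x; apply/funext => h; rewrite /peirce_rot conjC1 subrr !scale0r !addr0.
Qed.

Lemma peirce_rotN1 e : peirce_rot e (-1) = sigma e.
Proof.
apply/funext => x; apply/funext => h; apply: eq_ipl => z.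
by rewrite /peirce_rot /sigma /peirce_half rmorphN1 !(ipDl, ipNl, ipZl); ring.
Qed.

Section PeirceRot.
Variable e : H -> H.
Hypothesis pe : orthoproj e.
Let le : linear e. Proof. by case: pe. Qed.
Let ee : forall h, e (e h) = e h. Proof. by case: pe. Qed.

Lemma peirce_rotE c x h : linear x -> unimodular c ->
  peirce_rot e c x h = uphase e c (x (uphase e c^* h)).
Proof.
move=> lx hc.
apply: eq_ipl => z; rewrite /peirce_rot /uphase (unimodular_conjV hc).
rewrite !(linD le, linN le, linZ le, linD lx, linN lx, linZ lx, ee).
by rewrite !(ipDl, ipNl, ipZl); field; exact: unimodular_neq0.
Qed.

Lemma peirce_rot_opnorm c x k : linear x -> unimodular c -> opnorm_le ip x k ->
  opnorm_le ip (peirce_rot e c x) k.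
Proof.
move=> lx hc xk h; rewrite peirce_rotE // hnorm_uphase //.
by rewrite -(hnorm_uphase pe h (unimodularJ hc)) xk.
Qed.

Lemma peirce_rot_inV c x : unimodular c -> in_V ip x -> in_V ip (peirce_rot e c x).
Proof.
move=> hc [[lx [k xk]] sx]; have U := uphase_linear pe.
split; first split.
- have -> : peirce_rot e c x = uphase e c \o (x \o uphase e c^*).
    by apply/funext => h; rewrite peirce_rotE.
  exact: linear_comp (U _) (linear_comp lx (U _)).
- by exists k; apply: peirce_rot_opnorm.
- by move=> u v; rewrite !peirce_rotE // uphase_adj // sx uphase_adj // conjCK.
Qed.

Lemma peirce_rot_jordan c : unimodular c -> jordan_aut ip (peirce_rot e c).
Proof.
move=> hc; have U := uphase_linear pe c.
have E x h : linear x -> peirce_rot e c x h = uphase e c (x (uphase e c^* h)).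
  by move=> lx; rewrite peirce_rotE.
split.
- by move=> x; apply: peirce_rot_inV.
- move=> x y hx hy exy; apply/funext => h.
  have X z : in_V ip z -> z h = uphase e c^* (peirce_rot e c z (uphase e c h)).
    by move=> /inV_linear lz; rewrite E // !uphaseKV.
  by rewrite (X x hx) (X y hy) exy.
- move=> y hy; have hc' := unimodularJ hc; have yV := peirce_rot_inV hc' hy.
  exists (peirce_rot e c^* y); split=> //.
  have ly := inV_linear hy; have ly' := inV_linear yV.
  by apply/funext => h; rewrite E // peirce_rotE // (conjCK c) !uphaseK.
- move=> x y _ _; apply/funext => h; apply: eq_ipl => z.
  by rewrite /peirce_rot /op_add !(linD le, linN le) !(ipDl, ipNl, ipZl); ring.
split.
- move=> t x _; apply/funext => h; apply: eq_ipl => z.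
  by rewrite /peirce_rot /op_scale !(linD le, linN le, linZ le) !(ipDl, ipNl, ipZl); ring.
- move=> x y /inV_linear lx /inV_linear ly; apply/funext => h.
  have lxy := linear_jprod lx ly.
  by rewrite /jprod !E // (linZ U) (linD U) !uphaseKV.
Qed.

End PeirceRot.

Lemma peirce_rot_close e c d y (k : R) : orthoproj e -> in_V ip y -> opnorm_le ip y 1 ->
  0 <= k -> (c - d) * (c - d)^* <= (k ^+ 2)%:C ->
  opnorm_le ip (fun h => peirce_rot e c y h - peirce_rot e d y h) k.
Proof.
move=> pe /inV_linear ly y1 k0 cdk h; have [le se ee] := pe.
have y1' u : ip (y u) (y u) <= ip u u by have := y1 u; rewrite hnorm_leE // expr1n mul1r.
rewrite hnorm_leE //; apply: le_trans (ler_wpM2r (ip_ge0 h) cdk).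
set A := e (y (h - e h)); set B := y (e h) - e (y (e h)).
have -> : peirce_rot e c y h - peirce_rot e d y h = (c - d)^* *: A + (c - d) *: B.
  by apply: eq_ipl => z; rewrite /peirce_rot rmorphB !(ipDl, ipNl, ipZl); ring.
have AB : ip A B = 0 by rewrite /A se (linB le) ee subrr ip0r.
have BA : ip B A = 0 by rewrite ipC AB conjC0.
have AA : ip A A <= ip (h - e h) (h - e h).
  exact: le_trans (orthoproj_contract _ pe) (y1' _).
have BB : ip B B <= ip (e h) (e h).
  apply: le_trans (y1' (e h)).
  by rewrite [leRHS](orthoproj_pyth (y (e h)) pe) lerDr ip_ge0.
clearbody A B.
rewrite !(ipDl, ipZl, ipDr, ipZr) AB BA conjCK !mulr0 !addr0 add0r.
rewrite [leLHS](_ : _ = (c - d) * (c - d)^* * (ip A A + ip B B)); last by ring.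
apply: ler_wpM2l; first exact: mul_conjC_ge0.
by rewrite [leRHS](orthoproj_pyth h pe) addrC lerD.
Qed.

Local Notation Aut := ((H -> H) -> (H -> H)).

Lemma aut_close_le (Phi Psi : Aut) eps eps' : eps <= eps' ->
  aut_close ip Phi Psi eps -> aut_close ip Phi Psi eps'.
Proof.
move=> le_eps close x xV x1 h; apply: le_trans (close x xV x1 h) _.
by rewrite ler_wpM2r ?sqrtr_ge0.
Qed.

Lemma lipschitz_path_connected (F : R -> Aut) (K : R) : 0 < K ->
  (forall t s, 0 <= t <= 1 -> 0 <= s <= 1 -> aut_close ip (F t) (F s) (K * `|t - s|)) ->
  connected_set ip (fun Phi => exists2 t, 0 <= t <= 1 & Phi = F t).
Proof.
move=> K0 FK; set S := fun Phi => _.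
have SF t : 0 <= t <= 1 -> S (F t) by exists t.
have pull U : rel_open ip S U -> forall t, 0 <= t <= 1 -> U (F t) ->
    exists2 d, 0 < d & forall s, 0 <= s <= 1 -> `|t - s| < d -> U (F s).
  move=> oU t t01 Ut; have [eps [eps0 Ueps]] := oU _ (SF t t01) Ut.
  exists (eps / K) => [|s s01 ts]; first by rewrite divr_gt0.
  apply: Ueps; first exact: SF.
  by apply: aut_close_le (FK _ _ t01 s01); rewrite mulrC -ler_pdivlMr // ltW.
have clopen V1 V2 : rel_open ip S V1 -> rel_open ip S V2 ->
    (forall Phi, S Phi -> V1 Phi \/ V2 Phi) ->
    (forall Phi, S Phi -> V1 Phi -> V2 Phi -> False) ->
    V1 (F 0) -> forall Phi, S Phi -> V1 Phi.
  move=> o1 o2 cov disj V10 _ [t t01 ->].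
  apply: (unit_interval_connected (pull _ o1) (pull _ o2)) => // [s s01|s s01].
  - exact: cov (SF s s01).
  - exact: disj (SF s s01).
move=> U1 U2 o1 o2 cov disj; have S0 : 0 <= (0 : R) <= 1 by rewrite lexx ler01.
have [U10|U20] := cov _ (SF 0 S0); [left | right]; first exact: (clopen U1 U2).
apply: (clopen U2 U1) => // [Phi /cov []|Phi SPhi ? ?]; [by right | by left | exact: (disj Phi)].
Qed.

Lemma connected_setU (S1 S2 : Aut -> Prop) Phi0 :
  connected_set ip S1 -> connected_set ip S2 -> S1 Phi0 -> S2 Phi0 ->
  connected_set ip (fun Phi => S1 Phi \/ S2 Phi).
Proof.
move=> c1 c2 S1Phi0 S2Phi0 U1 U2 o1 o2 cov disj.
have restrict (S' : Aut -> Prop) : (forall Phi, S' Phi -> S1 Phi \/ S2 Phi) ->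
    connected_set ip S' -> (forall Phi, S' Phi -> U1 Phi) \/ (forall Phi, S' Phi -> U2 Phi).
  move=> sub c; apply: c => [Phi SPhi uPhi|Phi SPhi uPhi|Phi /sub|Phi /sub]; last 2 first.
  - exact: cov.
  - exact: disj.
  - by have [eps [eps0 h]] := o1 _ (sub _ SPhi) uPhi; exists eps; split=> // Psi /sub; apply: h.
  - by have [eps [eps0 h]] := o2 _ (sub _ SPhi) uPhi; exists eps; split=> // Psi /sub; apply: h.
have [k1|k1] := restrict S1 (fun Phi => @or_introl _ _) c1;
have [k2|k2] := restrict S2 (fun Phi => @or_intror _ _) c2.
- by left=> Phi [/k1|/k2].
- by case: (disj Phi0 (or_introl S1Phi0)); [exact: k1 | exact: k2].
- by case: (disj Phi0 (or_introl S1Phi0)); [exact: k2 | exact: k1].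
- by right=> Phi [/k1|/k2].
Qed.

Lemma connected_set1 (Phi0 : Aut) : connected_set ip (fun Phi => Phi = Phi0).
Proof. by move=> U1 U2 _ _ cov _; case: (cov Phi0 erefl) => h; [left|right] => Phi ->. Qed.

Lemma jordan_id : jordan_aut ip id.
Proof. by split=> // y yV; exists y. Qed.

Lemma jordan_comp (A B : Aut) : jordan_aut ip A -> jordan_aut ip B -> jordan_aut ip (A \o B).
Proof.
case=> A1 A2 A3 A4 [A5 A6]; case=> B1 B2 B3 B4 [B5 B6]; split.
- by move=> x xV; apply/A1/B1.
- by move=> x y xV yV /= /(A2 _ _ (B1 _ xV) (B1 _ yV)) /(B2 _ _ xV yV).
- move=> y yV; have [z [zV <-]] := A3 y yV; have [x [xV <-]] := B3 z zV.
  by exists x.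
- by move=> x y xV yV /=; rewrite B4 // A4 //; apply: B1.
split.
- by move=> t x xV /=; rewrite B5 // A5 //; apply: B1.
- by move=> x y xV yV /=; rewrite B6 // A6 //; apply: B1.
Qed.

Lemma in_S_jordan r g : in_S ip r g -> jordan_aut ip g.
Proof.
elim=> {g} [|p g pM _ IH]; first exact: jordan_id.
rewrite -peirce_rotN1; apply: jordan_comp IH.
exact: (peirce_rot_jordan (in_M_orthoproj pM) unimodularN1).
Qed.

Lemma in_S_unit_ball r g x : in_S ip r g -> in_V ip x -> opnorm_le ip x 1 ->
  opnorm_le ip (g x) 1.
Proof.
move=> gS; elim: gS x => {g} [//|p g pM gS IH] x xV x1 /=.
have [gV _ _ _ _] := in_S_jordan gS.
rewrite -peirce_rotN1; apply: peirce_rot_opnorm (IH x xV x1) => //.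
- exact: in_M_orthoproj pM.
- exact: inV_linear (gV x xV).
- exact: unimodularN1.
Qed.

Lemma in_S_Aut0 r g : in_S ip r g -> in_Aut0 ip g.
Proof.
have I0 : 0 <= (0 : R) <= 1 by rewrite lexx ler01.
have I1 : 0 <= (1 : R) <= 1 by rewrite lexx ler01.
elim=> {g} [|p g pM gS [S [Sj Sc Sid Sg]]].
  exists (fun Phi => Phi = id); split=> //; last exact: connected_set1.
  by move=> _ ->; exact: jordan_id.
have pe := in_M_orthoproj pM; have [gV _ _ _ _] := in_S_jordan gS.
pose F t := peirce_rot p (circle_path t) \o g.
exists (fun Phi => S Phi \/ exists2 t, 0 <= t <= 1 & Phi = F t); split.
- move=> _ [/Sj //|[t _ ->]]; apply: jordan_comp (in_S_jordan gS).
  exact: (peirce_rot_jordan pe (circle_path_unimodular t)).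
- apply: (connected_setU Sc _ Sg).
    apply: (@lipschitz_path_connected _ 4) => // t s _ _ x xV x1.
    apply: peirce_rot_close => //; first exact: gV.
    + exact: in_S_unit_ball gS xV x1.
    + by rewrite mulr_ge0.
    + exact: circle_path_lipschitz.
  by exists 0 => //; rewrite /F circle_path0 peirce_rot1.
- by left.
- by right; exists 1 => //; rewrite /F circle_path1 peirce_rotN1.
Qed.

Definition lin_indep n (x : 'I_n -> H) :=
  forall c : 'I_n -> C, \sum_(i < n) c i *: x i = 0 -> forall i, c i = 0.

Definition in_span n (w : 'I_n -> H) y := exists c : 'I_n -> C, y = \sum_(i < n) c i *: w i.

Lemma indep_span_leq m n (x : 'I_m -> H) (w : 'I_n -> H) :
  lin_indep x -> (forall j, in_span w (x j)) -> (m <= n)%N.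
Proof.
move=> xI /choice[d xd]; rewrite leqNgt; apply/negP => lt_nm.
pose A : 'M[C]_(m, n) := \matrix_(j, i) d j i.
have Ad j i : A j i = d j i by rewrite /A mxE.
have : kermx A != 0.
  rewrite -mxrank_eq0 mxrank_ker -lt0n subn_gt0.
  exact: leq_ltn_trans (rank_leq_col A) lt_nm.
rewrite matrix_eq0 => /forallPn[j0 /forallPn[i0 /negP]]; apply.
have KA i : \sum_(j < m) kermx A j0 j * d j i = 0.
  have := congr1 (fun M : 'M[C]_(m, n) => M j0 i) (mulmx_ker A).
  by rewrite !mxE => h; rewrite -[RHS]h; apply: eq_bigr => j _; rewrite Ad.
apply/eqP/(xI (fun j => kermx A j0 j)).
rewrite (eq_bigr (fun j => \sum_(i < n) (kermx A j0 j * d j i) *: w i)); last first.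
  by move=> j _; rewrite xd scaler_sumr; apply: eq_bigr => i _; rewrite scalerA.
by rewrite exchange_big big1 // => i _; rewrite -scaler_suml KA scale0r.
Qed.

Definition orthonormal (b : nat -> H) k :=
  forall i j, (i < k)%N -> (j < k)%N -> ip (b i) (b j) = (i == j)%:R.

Definition span_proj (b : nat -> H) k y := \sum_(j < k) ip y (b j) *: b j.

Definition extend_fam (b : nat -> H) k x := fun j => if (j < k)%N then b j else x.

Lemma span_proj_in_span (b : nat -> H) k y : in_span (fun j : 'I_k => b j) (span_proj b k y).
Proof. by exists (fun j => ip y (b j)). Qed.

Lemma ip_span_proj (b : nat -> H) k y l : orthonormal b k -> (l < k)%N ->
  ip (span_proj b k y) (b l) = ip y (b l).
Proof.
move=> bO lk; rewrite ip_suml (bigD1 (Ordinal lk)) //= bO // eqxx mulr1.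
rewrite big1 ?addr0 // => j; rewrite -val_eqE /= => /negbTE jl.
by rewrite bO ?ltn_ord // jl mulr0.
Qed.

Lemma span_proj_orth (b : nat -> H) k y l : orthonormal b k -> (l < k)%N ->
  ip (y - span_proj b k y) (b l) = 0.
Proof. by move=> bO lk; rewrite ipBl ip_span_proj ?subrr. Qed.

Lemma span_proj_fixed (P : H -> H) (b : nat -> H) k y : linear P ->
  (forall j, (j < k)%N -> P (b j) = b j) -> P (span_proj b k y) = span_proj b k y.
Proof. by move=> lP Pb; rewrite (lin_sum lP); apply: eq_bigr => j _; rewrite Pb. Qed.

Lemma orthonormal_indep (b : nat -> H) k : orthonormal b k -> lin_indep (fun j : 'I_k => b j).
Proof.
move=> bO c c0 l; have := congr1 (ip^~ (b l)) c0.
rewrite /= ip0l ip_suml (bigD1 l) //= bO // eqxx mulr1 big1 ?addr0 // => j.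
by rewrite -val_eqE => /negbTE jl; rewrite bO // jl mulr0.
Qed.

Lemma orthonormal_extend (b : nat -> H) k x : orthonormal b k -> ip x x = 1 ->
  (forall j, (j < k)%N -> ip x (b j) = 0) -> orthonormal (extend_fam b k x) k.+1.
Proof.
move=> bO x1 xb i j; rewrite !ltnS /extend_fam => ik jk.
have eq_k l : (l <= k)%N -> (k <= l)%N -> l = k by move=> lk kl; apply/anti_leq/andP.
case: (ltnP i k) => [i_lt|/(eq_k _ ik) ->]; case: (ltnP j k) => [j_lt|/(eq_k _ jk) ->].
- exact: bO.
- by rewrite ipC xb // conjC0 ltn_eqF.
- by rewrite xb // gtn_eqF.
- by rewrite x1 eqxx.
Qed.

Lemma in_span_basis n (w : 'I_n -> H) i : in_span w (w i).
Proof.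
exists (fun j => (j == i)%:R); rewrite (bigD1 i) //= eqxx scale1r big1 ?addr0 //.
by move=> j /negbTE ->; rewrite scale0r.
Qed.

Lemma has_rankP r (P : H -> H) : (forall h, P (P h) = P h) -> has_rank r P ->
  exists2 f : 'I_r -> H, lin_indep f & forall y, P y = y <-> in_span f y.
Proof.
move=> PP [f [fI fspan]]; exists f => // y.
by split=> [Py|/fspan[x <-]]; [apply/fspan; exists y | exact: PP].
Qed.

Lemma has_rank_transfer r (P Q T : H -> H) :
  (forall h, P (P h) = P h) -> (forall h, Q (Q h) = Q h) -> linear T ->
  (forall x, P x = x -> T x = 0 -> x = 0) ->
  (forall x, P x = x -> Q (T x) = T x) ->
  (forall y, Q y = y -> exists2 x, P x = x & T x = y) ->
  has_rank r P -> has_rank r Q.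
Proof.
move=> PP QQ lT Tinj Tinto Tonto /(has_rankP PP)[f fI fspan].
have Psum c : P (\sum_(i < r) c i *: f i) = \sum_(i < r) c i *: f i.
  by apply/fspan; exists c.
exists (fun i => T (f i)); split=> [c|y].
  by rewrite -(lin_sum lT) => /(Tinj _ (Psum c)) /fI.
split=> [[w <-]|[c ->]].
  have [x /fspan[c ->] <-] := Tonto _ (QQ w).
  by exists c; rewrite (lin_sum lT).
by exists (T (\sum_(i < r) c i *: f i)); rewrite -(lin_sum lT) Tinto.
Qed.

Definition normalize x := ((Num.sqrt (sqnorm x))^-1)%:C *: x.

Lemma sqnorm_gt0 x : x != 0 -> 0 < sqnorm x.
Proof.
move=> x0; rewrite lt_def sqnorm_ge0 andbT; apply: contra x0 => /eqP h.
by rewrite -ipxx_eq0 ipE h.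
Qed.

Lemma normalize_unit x : x != 0 -> ip (normalize x) (normalize x) = 1.
Proof.
move=> /sqnorm_gt0 x0; rewrite /normalize ipZl ipZr ipE.
rewrite geC0_conj ?ler0c ?invr_ge0 ?sqrtr_ge0 // -!rmorphM mulrA -expr2 exprVn.
by rewrite sqr_sqrtr ?ltW // mulVf ?gt_eqF.
Qed.

Lemma normalizeK x : (Num.sqrt (sqnorm x))%:C *: normalize x = x.
Proof.
have [->|/sqnorm_gt0 x0] := eqVneq x 0; first by rewrite /normalize !scaler0.
by rewrite /normalize scalerA -rmorphM mulfV ?scale1r // gt_eqF ?sqrtr_gt0.
Qed.

Lemma normalize_fixed (P : H -> H) y : linear P -> P y = y -> P (normalize y) = normalize y.
Proof. by move=> lP Py; rewrite /normalize (linZ lP) Py. Qed.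

Lemma normalize_orth x z : ip x z = 0 -> ip (normalize x) z = 0.
Proof. by move=> xz; rewrite ipZl xz mulr0. Qed.

Lemma exists_orth_in_range r (P : H -> H) (b : nat -> H) k :
  (forall h, P (P h) = P h) -> linear P -> has_rank r P -> (k < r)%N ->
  orthonormal b k -> (forall j, (j < k)%N -> P (b j) = b j) ->
  exists x, [/\ P x = x, x != 0 & forall j, (j < k)%N -> ip x (b j) = 0].
Proof.
move=> PP lP /(has_rankP PP)[f fI fspan] kr bO Pb.
have [[i fi]|fb] := pselect (exists i, f i - span_proj b k (f i) != 0).
  exists (f i - span_proj b k (f i)); split=> // [|j]; last exact: span_proj_orth.
  have Pfi : P (f i) = f i by apply/fspan/in_span_basis.
  by rewrite (linB lP) Pfi span_proj_fixed.
have fb' i : in_span (fun j : 'I_k => b j) (f i).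
  suff -> : f i = span_proj b k (f i) by apply: span_proj_in_span.
  by apply/eqP; rewrite -subr_eq0; apply: contraT => fi; case: fb; exists i.
by have := indep_span_leq fI fb'; rewrite leqNgt kr.
Qed.

Lemma orthoproj_span_proj r (P : H -> H) (b : nat -> H) : orthoproj P -> has_rank r P ->
  orthonormal b r -> (forall j, (j < r)%N -> P (b j) = b j) -> P =1 span_proj b r.
Proof.
move=> [lP sP PP] /(has_rankP PP)[f fI fspan] bO Pb h.
suff -> : P h = span_proj b r (P h).
  by apply: eq_bigr => j _; rewrite sP Pb ?ltn_ord.
set y := P h; apply/eqP; rewrite -subr_eq0; apply: contraT => y0.
set u := normalize (y - span_proj b r y).
have Pu : P u = u by rewrite normalize_fixed // (linB lP) PP span_proj_fixed.
have ub j : (j < r)%N -> ip u (b j) = 0 by move=> jr; rewrite normalize_orth ?span_proj_orth.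
have bO' := orthonormal_extend bO (normalize_unit y0) ub.
have ext j : in_span f (extend_fam b r u j).
  by apply/fspan; rewrite /extend_fam; case: ifP => // /Pb.
by have := indep_span_leq (orthonormal_indep bO') ext; rewrite ltnn.
Qed.

Lemma orthoprojD (P Q : H -> H) : orthoproj P -> orthoproj Q ->
  (forall h, P (Q h) = 0) -> orthoproj (fun h => P h + Q h).
Proof.
move=> [lP sP PP] [lQ sQ QQ] PQ.
have QP h : Q (P h) = 0 by apply: eq_ipl => z; rewrite ip0l sQ sP PQ ip0r.
split=> [c x y /=|x y /=|h /=].
- by rewrite lP lQ scalerDr addrACA.
- by rewrite !(ipDl, ipDr) sP sQ.
- by rewrite (linD lP) (linD lQ) PQ QP PP QQ addr0 add0r.
Qed.

Lemma orthoprojB (P Q : H -> H) : orthoproj P -> orthoproj Q ->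
  (forall h, P (Q h) = Q h) -> orthoproj (fun h => P h - Q h).
Proof.
move=> [lP sP PP] [lQ sQ QQ] PQ.
have QP h : Q (P h) = Q h by apply: eq_ipl => z; rewrite sQ sP PQ.
split=> [c x y /=|x y /=|h /=].
- by rewrite lP lQ scalerBr addrACA opprD.
- by rewrite !(ipBl, ipBr) sP sQ.
- by rewrite (linB lP) (linB lQ) PP PQ QP QQ subrr subr0.
Qed.

Definition lineproj (v : H) h := (ip h v / ip v v) *: v.

Lemma orthoproj_lineproj v : orthoproj (lineproj v).
Proof.
split=> [c x y|x y|h]; rewrite /lineproj.
- by rewrite ipDl ipZl mulrDl scalerDl scalerA mulrA.
- by rewrite ipZl ipZr rmorphM fmorphV /= -!ipC; ring.
- have [->|v0] := eqVneq v 0; first by rewrite !scaler0.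
  by rewrite ipZl mulfK ?ipxx_eq0.
Qed.

Lemma lineproj_unit a h : ip a a = 1 -> lineproj a h = ip h a *: a.
Proof. by move=> a1; rewrite /lineproj a1 divr1. Qed.

Lemma uphaseN1K e h : orthoproj e -> uphase e (-1) (uphase e (-1) h) = h.
Proof. by move=> pe; rewrite uphaseM // mulrNN mul1r uphase1. Qed.

Lemma uphaseN1_adj e : orthoproj e -> selfadj (uphase e (-1)).
Proof. by move=> pe x y; rewrite uphase_adj // rmorphN1. Qed.

Lemma sigma_uphase e P h : orthoproj e -> linear P ->
  sigma e P h = uphase e (-1) (P (uphase e (-1) h)).
Proof. by move=> pe lP; rewrite -peirce_rotN1 peirce_rotE ?rmorphN1 //; exact: unimodularN1. Qed.

Lemma sigma_in_M r e P : orthoproj e -> in_M ip r P -> in_M ip r (sigma e P).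
Proof.
move=> pe PM; have [lP sP PP] := in_M_orthoproj PM; set s := uphase e (-1).
have ls : linear s := uphase_linear pe (-1).
have ss h : s (s h) = h := uphaseN1K h pe.
have sa : selfadj s := uphaseN1_adj pe.
have Q_E : sigma e P = s \o P \o s by apply/funext => h; rewrite sigma_uphase.
have QQ h : sigma e P (sigma e P h) = sigma e P h by rewrite Q_E /= ss PP.
split.
  apply: orthoproj_projection; split=> //; rewrite Q_E.
    exact: linear_comp (linear_comp ls lP) ls.
  by move=> x y /=; rewrite sa sP sa.
case: PM => _ Pr; apply: (has_rank_transfer PP QQ ls _ _ _ Pr).
- by move=> x _ sx0; rewrite -(ss x) sx0 lin0.
- by move=> x Px; rewrite Q_E /= ss Px.
- by move=> y Qy; exists (P (s y)); [rewrite PP | rewrite -[RHS]Qy Q_E].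
Qed.

Lemma in_S_in_M r g p : in_S ip r g -> in_M ip r p -> in_M ip r (g p).
Proof. by move=> gS pM; elim: gS => // e f eM _; apply: sigma_in_M; exact: in_M_orthoproj eM. Qed.

Section Swap.
Variables (r : nat) (P : H -> H) (a b : H) (t : R).
Hypotheses (PM : in_M ip r P) (a1 : ip a a = 1) (b1 : ip b b = 1).
Hypotheses (Pa : P a = a) (Pb : P b = t%:C *: a) (t0 : 0 <= t).

(* [e] projects onto [ran P] with [a] replaced by [a + b]; its reflection
   [2 e - 1] swaps [a] and [b] and fixes [ran P] orthogonal to [a]. *)
Let G h := P h - lineproj a h.
Let v := a + b.
Let e h := G h + lineproj v h.

Let pP : orthoproj P. Proof. exact: in_M_orthoproj PM. Qed.
Let lP : linear P. Proof. by case: pP. Qed.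
Let sP : selfadj P. Proof. by case: pP. Qed.

Let GE h : G h = P h - ip h a *: a. Proof. by rewrite /G lineproj_unit. Qed.
Let tJ : (t%:C)^* = t%:C. Proof. by rewrite geC0_conj ?ler0c. Qed.
Let ba : ip b a = t%:C. Proof. by rewrite -Pa -sP Pb ipZl a1 mulr1. Qed.
Let ab : ip a b = t%:C. Proof. by rewrite ipC ba tJ. Qed.
Let t1_neq0 : 1 + t%:C != 0. Proof. by rewrite paddr_eq0 ?ler01 ?ler0c // oner_eq0. Qed.
Let av : ip a v = 1 + t%:C. Proof. by rewrite ipDr a1 ab. Qed.
Let va : ip v a = 1 + t%:C. Proof. by rewrite ipDl a1 ba. Qed.
Let vv : ip v v = 2 * (1 + t%:C). Proof. by rewrite ipDl !ipDr a1 b1 ab ba; ring. Qed.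

Let Ga : G a = 0. Proof. by rewrite GE Pa a1 scale1r subrr. Qed.
Let Gv : G v = 0.
Proof. by rewrite /v !GE (linD lP) Pa Pb ipDl a1 ba scalerDl scale1r subrr. Qed.

Let pG : orthoproj G.
Proof.
apply: (orthoprojB pP (orthoproj_lineproj a)) => h.
by rewrite /lineproj (linZ lP) Pa.
Qed.

Let PG h : P (G h) = G h. Proof. by rewrite GE (linB lP) (linZ lP) Pa; case: pP => _ _ ->. Qed.
Let ipGv h : ip (G h) v = 0. Proof. by case: pG => _ sG _; rewrite sG Gv ip0r. Qed.
Let ipGa h : ip (G h) a = 0. Proof. by case: pG => _ sG _; rewrite sG Ga ip0r. Qed.
Let GG h : G (G h) = G h. Proof. by case: pG => _ _ ->. Qed.
Let lG : linear G. Proof. by case: pG. Qed.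
Let lineproj_G h : lineproj v (G h) = 0. Proof. by rewrite /lineproj ipGv mul0r scale0r. Qed.
Let Glineproj h : G (lineproj v h) = 0. Proof. by rewrite (linZ lG) Gv scaler0. Qed.

Let pe : orthoproj e.
Proof. exact: (orthoprojD pG (orthoproj_lineproj v) Glineproj). Qed.

Let ea : e a = 2^-1 *: v.
Proof. by rewrite /e Ga add0r /lineproj av vv; congr (_ *: _); field. Qed.

Let e_rank : has_rank r e.
Proof.
have [le _ ee] := pe; have [_ _ PP] := pP.
case: PM => _; apply: (has_rank_transfer PP ee le) => [x Px ex0|x _|y ey].
- have xv : ip x v = (1 + t%:C) * ip x a by rewrite ipDr -{2}Px sP Pb ipZr tJ; ring.
  have : ip (e x) a = 0 by rewrite ex0 ip0l.
  rewrite ipDl ipGa add0r /lineproj ipZl xv vv va => /eqP.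
  rewrite !mulf_eq0 invr_eq0 mulf_eq0 (negbTE t1_neq0) pnatr_eq0 /= !orbF => /eqP xa0.
  by rewrite -ex0 /e /lineproj xv xa0 mulr0 mul0r scale0r addr0 GE xa0 scale0r subr0 Px.
- exact: ee.
- exists (G y + (ip y v / (1 + t%:C)) *: a).
    by rewrite (linD lP) (linZ lP) PG Pa.
  rewrite -[RHS]ey /e (linD lG) (linZ lG) GG Ga scaler0 addr0 /lineproj.
  by rewrite ipDl ipGv add0r ipZl av divfK.
Qed.

Let swap_sigma h : sigma e P h = P h - ip h a *: a + ip h b *: b.
Proof.
set s := uphase e (-1).
have sE w : s w = e w - (w - e w) by rewrite /s /uphase scaleN1r.
have sa : s a = b.
  by apply: eq_ipl => z; rewrite sE ea /v !(ipDl, ipNl, ipZl); field.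
have sG w : s (G w) = G w by rewrite sE /e GG lineproj_G addr0 subrr subr0.
have Gs : G (s h) = G h.
  by rewrite sE !(linB lG) /e (linD lG) GG Glineproj addr0 subrr subr0.
have PE w : P w = G w + ip w a *: a by rewrite GE subrK.
have ls : linear s := uphase_linear pe (-1).
have ss : selfadj s := uphaseN1_adj pe.
rewrite sigma_uphase // -/s PE Gs (linD ls) (linZ ls) sG ss sa.
by rewrite PE addrK.
Qed.

Lemma sigma_swap : exists e, in_M ip r e /\ forall h, sigma e P h = P h - ip h a *: a + ip h b *: b.
Proof.
exists e; split; last exact: swap_sigma.
split; [apply: orthoproj_projection pe | exact: e_rank].
Qed.

End Swap.

Lemma exists_partner r P (b : nat -> H) k x : in_M ip r P -> (k < r)%N ->
  orthonormal b k -> (forall j, (j < k)%N -> P (b j) = b j) ->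
  (forall j, (j < k)%N -> ip x (b j) = 0) ->
  exists a (t : R), [/\ P a = a, ip a a = 1, forall j, (j < k)%N -> ip a (b j) = 0,
                       0 <= t & P x = t%:C *: a].
Proof.
move=> PM kr bO Pb xb; have [lP sP PP] := in_M_orthoproj PM; have [_ Pr] := PM.
have [Px0|Px0] := eqVneq (P x) 0.
  have [y [Py y0 yb]] := exists_orth_in_range PP lP Pr kr bO Pb.
  exists (normalize y), 0; split=> //; first exact: normalize_fixed.
  - exact: normalize_unit.
  - by move=> j jk; rewrite normalize_orth ?yb.
  - by rewrite Px0 scale0r.
exists (normalize (P x)), (Num.sqrt (sqnorm (P x))); split.
- exact/normalize_fixed/PP.
- exact: normalize_unit.
- by move=> j jk; rewrite normalize_orth // sP Pb ?xb.
- exact: sqrtr_ge0.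
- by rewrite normalizeK.
Qed.

Lemma S_common_orthonormal r p q : in_M ip r p -> in_M ip r q -> forall k, (k <= r)%N ->
  exists g (b : nat -> H), [/\ in_S ip r g, orthonormal b k,
    forall j, (j < k)%N -> g p (b j) = b j & forall j, (j < k)%N -> q (b j) = b j].
Proof.
move=> pM qM; have [lq _ qq] := in_M_orthoproj qM; have [_ qr] := qM.
elim=> [_|k IH kr].
  by exists id, (fun _ => 0); split=> [|i j|j|j]; rewrite ?ltn0 //; exact: S_id.
have [g [b [gS bO gb qb]]] := IH (ltnW kr).
have gpM := in_S_in_M gS pM; have [_ sP _] := in_M_orthoproj gpM.
have [x [qx x0 xb]] := exists_orth_in_range qq lq qr kr bO qb.
set c := normalize x; have c1 : ip c c = 1 := normalize_unit x0.
have qc : q c = c by rewrite normalize_fixed.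
have cb j : (j < k)%N -> ip c (b j) = 0 by move=> jk; rewrite normalize_orth ?xb.
have [a [t [Pa a1 ab t0 Pc]]] := exists_partner gpM kr bO gb cb.
have ca : ip c a = t%:C by rewrite -Pa -sP Pc ipZl a1 mulr1.
have [e [eM eE]] := sigma_swap gpM a1 c1 Pa Pc t0.
exists (sigma e \o g), (extend_fam b k c); split.
- exact: S_step.
- exact: orthonormal_extend.
- move=> j _ /=; rewrite eE /extend_fam; case: ifP => [jk|_].
    by rewrite gb // !(ipC _ (b j)) ab ?cb // conjC0 !scale0r subr0 addr0.
  by rewrite Pc ca subrr add0r c1 scale1r.
- by move=> j _; rewrite /extend_fam; case: ifP => [/qb|].
Qed.

Lemma S_transitive r p q : in_M ip r p -> in_M ip r q ->
  exists g, in_S ip r g /\ g p = q.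
Proof.
move=> pM qM; have [g [b [gS bO gb qb]]] := S_common_orthonormal pM qM (leqnn r).
have gpM := in_S_in_M gS pM; have [_ gpr] := gpM; have [_ qr] := qM.
exists g; split=> //; apply/funext => h.
rewrite (orthoproj_span_proj (in_M_orthoproj gpM) gpr bO gb).
by rewrite (orthoproj_span_proj (in_M_orthoproj qM) qr bO qb).
Qed.

Lemma Aut0_transitive r p q : in_M ip r p -> in_M ip r q ->
  exists Phi, in_Aut0 ip Phi /\ Phi p = q.
Proof.
move=> pM qM; have [g [gS gpq]] := S_transitive pM qM.
by exists g; split=> //; exact: in_S_Aut0 gS.
Qed.

End InnerProductSpace.

Theorem proposition4p8 (R : realType) (H : lmodType R[i]) (ip : H -> H -> R[i])
  (hH : is_complex_hilbert ip) (r : nat) (hr : (0 < r)%N) :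
  (forall p q : H -> H, in_M ip r p -> in_M ip r q ->
     exists Phi, in_Aut0 ip Phi /\ Phi p = q) /\
  (forall p q : H -> H, in_M ip r p -> in_M ip r q ->
     exists g, in_S ip r g /\ g p = q).
Proof.
have hip := complex_hilbert_inner_product hH.
by split=> p q pM qM; [exact: (Aut0_transitive hip pM qM) | exact: (S_transitive hip pM qM)].
Qed.
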